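(* Let $G$ be a graph and $F\subseteq E(G)$ such that $G/F$ is a cactus, and let $\mathcal{W}$ be the $G/F$-witness structure of $G$. Then there exists a coloring $f:V(G)\to\{1,2,3\}$ that is compatible with $\mathcal{W}$.
   Context: A cactus is a connected graph in which every edge lies in at most one cycle. For $F\subseteq E(G)$, $G/F$ is the graph whose vertices correspond to the parts of the partition of $V(G)$ into the vertex sets of connected components of $(V(F),F)$ and singletons $\{v\}$ for $v\notin V(F)$, two parts adjacent iff some edge of $G$ joins them; this partition is the $G/F$-witness structure $\mathcal{W}$, and the part corresponding to vertex $t$ of $T=G/F$ is denoted $W(t)$. A witness set is big if it has at least two vertices, singleton otherwise. A cable path in a graph $H$ is a path $(v_1,\dots,v_q)$ such that for each $2\le i\le q-1$, $N_H(v_i)=\{v_{i-1},v_{i+1}\}$. A coloring $f:V(G)\to\{1,2,3\}$ is compatible with the $T$-witness structure $\mathcal{W}$ if: (1) every witness set $W(t)$ is monochromatic (so $f(W(t))$ is well defined); (2) for every edge $t_xt_y\in E(T)$ with $W(t_x),W(t_y)$ both big, $f(W(t_x))\ne f(W(t_y))$; (3) for every cable path $(t_x,t_1,\dots,t_q,t_y)$ in $T$ ($q\ge1$) with $W(t_x),W(t_y)$ big and all $W(t_i)$ ($1\le i\le q$) singleton, $f(W(t_x))\neq f(W(t_1))$ and $f(W(t_y))\ne f(W(t_q))$. *)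

From mathcomp Require Import all_boot.
Set Implicit Arguments. Unset Strict Implicit. Unset Printing Implicit Defensive.

Section GraphNotions.
Variables (V : finType) (adj : rel V).

Definition gcycle (c : seq V) : bool := [&& uniq c, 2 < size c & cycle adj c].

Definition cedge (c : seq V) (x y : V) : bool :=
  ((x \in c) && (next c x == y)) || ((y \in c) && (next c y == x)).

(* a cactus: connected, and every edge lies in at most one cycle
   (two cycles through a common edge have the same edge set) *)
Definition cactus : Prop :=
  (forall x y, connect adj x y) /\
  (forall c1 c2 x y, gcycle c1 -> gcycle c2 -> cedge c1 x y -> cedge c2 x y ->
     forall u v, cedge c1 u v = cedge c2 u v).

Definition cable_path (s : seq V) : Prop :=
  uniq s /\
  (match s with x :: s' => path adj x s' | [::] => True end) /\
  (forall (x0 : V) i, 0 < i -> i.+1 < size s ->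
     forall u, adj (nth x0 s i) u = (u == nth x0 s i.-1) || (u == nth x0 s i.+1)).
End GraphNotions.

Section Contraction.
Variables (T : finType) (e F : rel T).
(* G = (T, e) a simple graph, F a (symmetric) set of edges of G *)

(* the witness set containing x : connected component of (V(F),F), or {x} *)
Definition wset (x : T) : {set T} := [set y | connect F x y].
Definition wsets : {set {set T}} := [set wset x | x in T].

(* vertices of T = G/F : the witness sets *)
Definition qvert := {A : {set T} | A \in wsets}.

Definition qadj : rel qvert := fun A B =>
  (val A != val B) &&
  [exists x, [exists y, [&& x \in val A, y \in val B & e x y]]].

Definition big (t : qvert) : bool := 1 < #|val t|.

(* compatibility of f : V(G) -> {1,2,3} (here 'I_3) with the witness structure *)
Definition compatible (f : T -> 'I_3) : Prop :=
  (forall t : qvert, forall x y, x \in val t -> y \in val t -> f x = f y) /\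
  (forall tx ty : qvert, qadj tx ty -> big tx -> big ty ->
     forall x y, x \in val tx -> y \in val ty -> f x != f y) /\
  (forall (tx ty : qvert) (ts : seq qvert), 0 < size ts ->
     cable_path qadj (tx :: ts ++ [:: ty]) ->
     big tx -> big ty -> all (fun t => ~~ big t) ts ->
     (forall t1, t1 = head tx ts ->
        forall x y, x \in val tx -> y \in val t1 -> f x != f y) /\
     (forall tq, tq = last tx ts ->
        forall x y, x \in val ty -> y \in val tq -> f x != f y)).
End Contraction.

Arguments wset {T} F x.
Arguments wsets {T} F.
Arguments qvert {T} F.
Arguments qadj {T} e F.
Arguments big {T} F t.
Arguments compatible {T} e F f.

From mathcomp Require Import all_boot zify.
Set Implicit Arguments. Unset Strict Implicit. Unset Printing Implicit Defensive.

(* A proper 3-colouring of the cactus G/F, pulled back to V(G), is compatible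
   with the witness structure: witness sets are monochromatic and every
   condition of compatibility only asks adjacent vertices of G/F to receive
   different colours.  Cacti are 2-degenerate, hence 3-colourable: let
   x :: p be a simple path in a nonempty vertex set S that cannot be extended
   at x, so all neighbours of x in S lie on p.  If x had three of them, two
   beyond p_0, say p_i and p_j with 0 < i < j, would close two distinct cycles
   x p_0 ... p_i and x p_0 ... p_j through the common edge x p_0. *)

Section Degeneracy.
Variables (V : finType) (adj : rel V).
Hypotheses (adj_sym : symmetric adj) (adj_irr : irreflexive adj).

Lemma degenerate_coloring k :
  (forall S : {set V}, S != set0 ->
     exists2 v, v \in S & #|[set u in S | adj v u]| <= k) ->
  exists c : V -> 'I_k.+1, forall x y, adj x y -> c x != c y.
Proof.
move=> low_deg.
suff [c hc] : exists c : V -> 'I_k.+1, forall x y,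
    x \in [set: V] -> y \in [set: V] -> adj x y -> c x != c y.
  by exists c => x y; apply: hc; rewrite inE.
move: {2}#|[set: V]| (leqnn #|[set: V]|) => n; elim: n [set: V] => [|n IH] S hS.
  exists (fun _ => ord0) => x y.
  by move: hS; rewrite leqn0 => /eqP/cards0_eq ->; rewrite inE.
have [->|S0] := eqVneq S set0; first by exists (fun _ => ord0) => x y; rewrite inE.
have [v vS hv] := low_deg S S0.
have [c hc] : exists c : V -> 'I_k.+1, forall x y, x \in S :\ v -> y \in S :\ v ->
    adj x y -> c x != c y.
  by apply: IH; move: hS; rewrite (cardsD1 v S) vS.
set N := [set u in S | adj v u] in hv.
have [a aN] : exists a, a \notin c @: N.
  apply/existsP; rewrite -negb_forall; apply/forallP => full.
  have : #|'I_k.+1| <= #|c @: N| by apply/subset_leq_card/subsetP.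
  by rewrite card_ord; move: (leq_imset_card c N) hv; lia.
exists (fun u => if u == v then a else c u) => x y xS yS xy.
have vN z : z \in S -> adj v z -> a != c z.
  by move=> zS vz; apply: contraNneq aN => ->; apply: imset_f; rewrite inE zS vz.
have [xv|xv] := eqVneq x v; have [yv|yv] := eqVneq y v.
- by move: xy; rewrite xv yv adj_irr.
- by subst x; apply: vN.
- by subst y; rewrite eq_sym; apply: vN; rewrite // adj_sym.
- by apply: hc; rewrite // !inE ?xv ?yv.
Qed.

End Degeneracy.

Lemma next_cons_head (T : eqType) (x : T) s : next (x :: s) x = nth x s 0.
Proof. by rewrite next_nth mem_head /= eqxx. Qed.

Lemma next_cons_nth (T : eqType) (x : T) s k : uniq s -> x \notin s -> k < size s ->
  next (x :: s) (nth x s k) = nth x s k.+1.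
Proof.
move=> us xs ks; have sk : nth x s k \in s by apply: mem_nth.
rewrite next_nth inE sk orbT /= index_uniq //.
by have -> : (x == nth x s k) = false by apply: contraNF xs => /eqP->.
Qed.

Section CactusDegeneracy.
Variables (V : finType) (adj : rel V).
Hypotheses (adj_sym : symmetric adj) (adj_irr : irreflexive adj).
Hypothesis edge_in_one_cycle : forall c1 c2 x y, gcycle adj c1 -> gcycle adj c2 ->
  cedge c1 x y -> cedge c2 x y -> forall u v, cedge c1 u v = cedge c2 u v.

Definition upath_in (S : {set V}) (x : V) (p : seq V) : bool :=
  [&& x \in S, all (mem S) p, uniq (x :: p) & path adj x p].

Lemma upath_in_extend (S : {set V}) x p u :
  upath_in S x p -> u \in S -> adj x u -> u \notin p -> upath_in S u (x :: p).
Proof.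
case/and4P=> xS pS xp px uS xu up.
have ux : u != x by apply: contraTneq xu => ->; rewrite adj_irr.
rewrite /upath_in cons_uniq xp /= uS xS pS px adj_sym xu inE negb_or ux up //=.
Qed.

Lemma upath_in_size (S : {set V}) x p : upath_in S x p -> size (x :: p) <= #|S|.
Proof.
case/and4P=> xS /allP pS xp _; rewrite -(card_uniqP xp).
by apply/subset_leq_card/subsetP => z; rewrite inE => /orP[/eqP->|/pS].
Qed.

Lemma maximal_upath_in (S : {set V}) x0 : x0 \in S ->
  exists x p, upath_in S x p /\ forall u, u \in S -> adj x u -> u \in p.
Proof.
move=> x0S; suff grow n x p : upath_in S x p -> #|S| - size p <= n ->
    exists x' p', upath_in S x' p' /\ forall u, u \in S -> adj x' u -> u \in p'.
  by apply: (grow #|S| x0 [::]); rewrite ?subn0 // /upath_in x0S.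
elim: n x p => [|n IH] x p xp hn.
  exists x, p; split=> // u uS xu; apply/negPn/negP=> up.
  by have := upath_in_size (upath_in_extend xp uS xu up); move: hn => /=; lia.
have [/existsP[u /and3P[uS xu up]]|] :=
  boolP [exists u, [&& u \in S, adj x u & u \notin p]].
  have ext := upath_in_extend xp uS xu up.
  by apply: (IH u (x :: p)) => //; move: hn (upath_in_size ext) => /=; lia.
rewrite negb_exists => /forallP no_ext; exists x, p; split=> // u uS xu.
by move: (no_ext u); rewrite uS xu /= negbK.
Qed.

Lemma gcycle_chord (x : V) p k : uniq (x :: p) -> path adj x p -> 0 < k < size p ->
  adj x (nth x p k) -> gcycle adj (x :: take k.+1 p).
Proof.
case/andP=> xp up px /andP[k0 kp] xk.
rewrite /gcycle /= size_takel //; apply/and3P; split=> //.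
  by rewrite take_uniq // andbT; apply: contra xp; apply: mem_take.
rewrite (take_nth x kp) rcons_path last_rcons -(take_nth x kp) take_path //=.
by rewrite adj_sym.
Qed.

Lemma cedge_chord_head (x : V) p k : k < size p ->
  cedge (x :: take k.+1 p) x (nth x p 0).
Proof. by move=> kp; rewrite /cedge mem_head next_cons_head nth_take // eqxx. Qed.

Lemma cedge_chord (x : V) p i k : uniq (x :: p) -> 0 < i <= k -> k < size p ->
  cedge (x :: take k.+1 p) x (nth x p i) = (i == k).
Proof.
case/andP=> xp up /andP[i0 ik] kp; set s := take k.+1 p.
have ss : size s = k.+1 by rewrite size_takel.
have si : i < size s by rewrite ss ltnS.
have xs : x \notin s by apply: contra xp; apply: mem_take.
have us : uniq s by apply: take_uniq.
rewrite /cedge mem_head next_cons_head -(nth_take x (ik : i < k.+1)) -/s.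
rewrite next_cons_nth // inE (mem_nth x si) orbT nth_uniq // ?ss //.
rewrite eq_sym (gtn_eqF i0) /=.
have [ik'|ki] := ltnP i k; last first.
  have -> : i = k by apply/eqP; rewrite eqn_leq ik ki.
  by rewrite nth_default ?ss // !eqxx.
rewrite (ltn_eqF ik'); apply/negbTE/eqP => sx.
by move: xs; rewrite -sx mem_nth // ss.
Qed.

Lemma no_two_chords (x : V) p i j : uniq (x :: p) -> path adj x p ->
  0 < i < j -> j < size p -> adj x (nth x p i) -> adj x (nth x p j) -> False.
Proof.
move=> xp px /andP[i0 ij] jp xi xj; have ip := ltn_trans ij jp.
have Ci : 0 < i < size p by rewrite i0.
have Cj : 0 < j < size p by rewrite (ltn_trans i0 ij).
have := edge_in_one_cycle (gcycle_chord xp px Ci xi) (gcycle_chord xp px Cj xj)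
  (cedge_chord_head x ip) (cedge_chord_head x jp) x (nth x p i).
rewrite !cedge_chord ?i0 ?leqnn ?(ltnW ij) // eqxx => /esym/eqP ji.
by move: ij; rewrite ji ltnn.
Qed.

Lemma cactus_low_degree (S : {set V}) : S != set0 ->
  exists2 v, v \in S & #|[set u in S | adj v u]| <= 2.
Proof.
case/set0Pn=> x0 /maximal_upath_in[x [p [xp on_p]]].
case/and4P: xp => xS _ uxp px; exists x => //.
set N := [set u in S | adj x u]; rewrite leqNgt; apply/negP => N3.
have /card_gt1P [a [b [aN bN ab]]] : 1 < #|N :\ nth x p 0|.
  by move: N3; rewrite (cardsD1 (nth x p 0) N); case: (_ \in N); lia.
have chord u : u \in N :\ nth x p 0 ->
    [/\ adj x (nth x p (index u p)), 0 < index u p & index u p < size p].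
  rewrite !inE => /and3P[u0 uS xu]; have up := on_p u uS xu.
  rewrite nth_index // xu index_mem up lt0n; split=> //.
  by apply: contra u0 => /eqP i0; rewrite -{1}(nth_index x up) i0.
have [[xa a0 ap] [xb b0 bp]] := (chord a aN, chord b bN).
have [lt|lt|eq] := ltngtP (index a p) (index b p).
- by apply: (no_two_chords uxp px _ bp xa xb); rewrite a0.
- by apply: (no_two_chords uxp px _ ap xb xa); rewrite b0.
- have [ap' bp'] : a \in p /\ b \in p by rewrite -!index_mem.
  by move: ab; rewrite -(nth_index x ap') -(nth_index x bp') eq eqxx.
Qed.

End CactusDegeneracy.

Section Contraction.
Variables (T : finType) (e F : rel T).
Hypotheses (e_sym : symmetric e) (F_sym : symmetric F).

Lemma wset_in_wsets x : wset F x \in wsets F.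
Proof. exact: imset_f. Qed.

Definition qvert_of (x : T) : qvert F := exist _ (wset F x) (wset_in_wsets x).

Lemma qvert_ofP (t : qvert F) x : x \in val t -> qvert_of x = t.
Proof.
case: t => A /= A_wset xA; apply: val_inj => /=.
case/imsetP: A_wset xA => z _ ->; rewrite inE => zx.
apply/setP => y; rewrite !inE; apply/idP/idP; first exact: connect_trans.
by apply: connect_trans; rewrite (sym_connect_sym F_sym).
Qed.

Lemma qadj_sym : symmetric (qadj e F).
Proof.
move=> A B; rewrite /qadj eq_sym; congr (_ && _).
by apply/existsP/existsP=> -[x /existsP[y /and3P[xA yB xy]]];
  exists y; apply/existsP; exists x; rewrite xA yB e_sym.
Qed.

Lemma qadj_irr : irreflexive (qadj e F).
Proof. by move=> A; rewrite /qadj eqxx. Qed.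

Lemma compatible_qvert_of (c : qvert F -> 'I_3) :
  (forall A B, qadj e F A B -> c A != c B) -> compatible e F (c \o qvert_of).
Proof.
move=> c_proper; have c_pull (A B : qvert F) x y : x \in val A -> y \in val B ->
    qadj e F A B -> (c \o qvert_of) x != (c \o qvert_of) y.
  by move=> xA yB /c_proper; rewrite /= (qvert_ofP xA) (qvert_ofP yB).
split; [|split].
- by move=> t x y xt yt /=; rewrite (qvert_ofP xt) (qvert_ofP yt).
- by move=> A B AB _ _ x y xA yB; apply: c_pull AB.
move=> A B ts ts0 [_ [/= + _]] _ _ _; rewrite cat_path /= andbT => /andP[Ats tsB].
split=> [t1 -> | tq -> ] x y xA yt; apply: c_pull xA yt _; last by rewrite qadj_sym.
by case: ts ts0 Ats {tsB} => // t ts _ /andP[].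
Qed.

End Contraction.

Theorem lemma3p1 (T : finType) (e F : rel T) :
  symmetric e -> irreflexive e ->
  symmetric F -> subrel F e ->
  cactus (qadj e F) ->
  exists f : T -> 'I_3, compatible e F f.
Proof.
move=> e_sym _ F_sym _ [_ edge_in_one_cycle].
have [c c_proper] := degenerate_coloring (qadj_sym e_sym) (@qadj_irr _ e F)
  (cactus_low_degree (qadj_sym e_sym) (@qadj_irr _ e F) edge_in_one_cycle).
by exists (c \o qvert_of F); apply: compatible_qvert_of.
Qed.
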